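(* Let $P,Q,R$ be unary predicate symbols and $S$ a $0$-ary predicate symbol, and let $$\Gamma = \forall x\, \exists y\, (Py \wedge (Qy \rightarrow Rx)) \wedge \neg \forall x\, Rx, \qquad \Delta = \forall x\, (Px \rightarrow (Qx \vee S)) \rightarrow S.$$ Then the implication $\Gamma\rightarrow\Delta$ is valid in all G-models; that is, for every G-model $\mathcal M$ and every state $v$ of $\mathcal M$, if $v\Vdash\Gamma$ then $v\Vdash\Delta$.
   Context: $\neg A$ abbreviates $A\rightarrow\perp$. A G-model is $\mathcal{M}=\langle W,\le,v_0,D,\phi\rangle$: $W$ a nonempty set of states, $\le$ a reflexive transitive relation on $W$, $v_0\in W$ with $v_0\le v$ for all $v\in W$, $D$ a nonempty domain, and for each $k$-ary predicate symbol $P$ a set $\phi(P)\subseteq W\times D^k$ that is monotone: if $v\le w$ and $\langle v,a_1,\dots,a_k\rangle\in\phi(P)$ then $\langle w,a_1,\dots,a_k\rangle\in\phi(P)$. Forcing between states and sentences with constants $\mathbf a$ for elements $a\in D$: $v\Vdash P\mathbf a_1\dots\mathbf a_k$ iff $\langle v,a_1,\dots,a_k\rangle\in\phi(P)$; $\wedge,\vee$ are evaluated pointwise; $v\Vdash A\rightarrow B$ iff for all $w\ge v$, $w\Vdash A$ implies $w\Vdash B$; $\perp$ is never forced; $v\Vdash\exists x A$ iff $v\Vdash A[\mathbf a/x]$ for some $a\in D$; $v\Vdash\forall xA$ iff $v\Vdash A[\mathbf a/x]$ for all $a\in D$. *)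

From Stdlib Require Import PeanoNat List.
Import ListNotations.

Inductive pred_sym : Type := Psym | Qsym | Rsym | Ssym.

Definition arity (p : pred_sym) : nat :=
  match p with Ssym => 0 | _ => 1 end.

(* Quantifiers
   are represented by higher-order abstract syntax: the body of a quantifier
   over x is a function  a |-> A[a/x]  from D to formulas, so instantiating the
   bound variable with the constant a (the substitution A[a/x] of the paper) is
   application of the body to a. *)
Inductive formula (D : Type) : Type :=
| fatom : forall p : pred_sym, list D -> formula D
| fbot : formula D
| fand : formula D -> formula D -> formula D
| for_ : formula D -> formula D -> formula D
| fimp : formula D -> formula D -> formula D
| fex : (D -> formula D) -> formula D
| fall : (D -> formula D) -> formula D.
Arguments fatom {D} _ _.
Arguments fbot {D}.
Arguments fand {D} _ _.
Arguments for_ {D} _ _.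
Arguments fimp {D} _ _.
Arguments fex {D} _.
Arguments fall {D} _.

Definition fneg {D} (A : formula D) : formula D := fimp A fbot.

Record GModel : Type := {
  W : Type;
  le : W -> W -> Prop;
  le_refl : forall v, le v v;
  le_trans : forall u v w, le u v -> le v w -> le u w;
  v0 : W;
  v0_least : forall v, le v0 v;
  D : Type;
  D_inhabited : inhabited D;
  phi : pred_sym -> W -> list D -> Prop;
  phi_arity : forall p v ds, phi p v ds -> length ds = arity p;
  phi_mono : forall p v w ds, le v w -> phi p v ds -> phi p w ds
}.

Fixpoint forces (M : GModel) (v : W M) (A : formula (D M)) : Prop :=
  match A with
  | fatom p ds => phi M p v ds
  | fbot => False
  | fand B C => forces M v B /\ forces M v C
  | for_ B C => forces M v B \/ forces M v C
  | fimp B C => forall w, le M v w -> forces M w B -> forces M w C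
  | fex B => exists a : D M, forces M v (B a)
  | fall B => forall a : D M, forces M v (B a)
  end.

Definition Pf {D} (a : D) : formula D := fatom Psym [a].
Definition Qf {D} (a : D) : formula D := fatom Qsym [a].
Definition Rf {D} (a : D) : formula D := fatom Rsym [a].
Definition Sf {D} : formula D := fatom Ssym [].

Definition Gamma {D} : formula D :=
  fand (fall (fun x => fex (fun y => fand (Pf y) (fimp (Qf y) (Rf x)))))
       (fneg (fall (fun x => Rf x))).

Definition Delta {D} : formula D :=
  fimp (fall (fun x => fimp (Pf x) (for_ (Qf x) Sf))) Sf.

(** Suppose [w >= v] forces [forall x (P x -> Q x \/ S)]. If [S] failed at [w],
    then for every [a] the witness [y] with [P y /\ (Q y -> R a)] at [v] still
    satisfies [P y] at [w], so [Q y] and hence [R a] hold at [w]: [w] would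
    force [forall x R x], which [v ||- ~ forall x R x] forbids. So [w] forces
    [S]; the case split on [S] at [w] is classical in the metatheory. *)

From Stdlib Require Import Classical List.
Import ListNotations.

Lemma forces_all_R_of_not_S (M : GModel) (v w : W M) :
  le M v w ->
  forces M v (fall (fun x => fex (fun y => fand (Pf y) (fimp (Qf y) (Rf x))))) ->
  forces M w (fall (fun x => fimp (Pf x) (for_ (Qf x) Sf))) ->
  ~ forces M w Sf ->
  forces M w (fall (fun x => Rf x)).
Proof.
  intros Hvw Hwitness Hcover HnS a; simpl in *.
  destruct (Hwitness a) as [y [HPy HQR]].
  assert (HPy_w : phi M Psym w [y]) by exact (phi_mono M Psym v w [y] Hvw HPy).
  destruct (Hcover y w (le_refl M w) HPy_w) as [HQy | HS].
  - exact (HQR w Hvw HQy).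
  - contradiction.
Qed.

Theorem lemma3p1 :
  forall (M : GModel) (v : W M), forces M v Gamma -> forces M v Delta.
Proof.
  intros M v [Hwitness HnotR] w Hvw Hcover.
  destruct (classic (forces M w Sf)) as [HS | HnS]; [exact HS |].
  exfalso.
  exact (HnotR w Hvw (forces_all_R_of_not_S M v w Hvw Hwitness Hcover HnS)).
Qed.
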